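(* Let $\alpha_1,\dots,\alpha_r\in\mathbb{T}\setminus\{0\}$, $D=\{\alpha_1,\dots,\alpha_r\}$, $\alpha=(\alpha_1,\dots,\alpha_r)\in\mathbb{T}^r$. Then $$\mathrm{Md}_{\mathbb{T}}(D)\ \ge\ \kappa_{\mathbb{T}}(D):=\max\Big\{\min_{i\in[r]}\|\beta_i\|:\ \beta=(\beta_1,\dots,\beta_r)\in\overline{\mathbb{Z}\alpha}\Big\},$$ where $\overline{\mathbb{Z}\alpha}$ is the closure in $\mathbb{T}^r$ of $\{N\alpha: N\in\mathbb{Z}\}$.
   Context: $\mathbb{T}=\mathbb{R}/\mathbb{Z}$ with Haar probability measure $\mu$; $\|x\|$ is the distance to the nearest integer. $\mathrm{Md}_{\mathbb{T}}(D)=\sup\{\mu(A): A\subset\mathbb{T}\text{ Borel},\ (A-A)\cap D=\emptyset\}$. *)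

(* T = R/Z modelled by representatives in R : realType. *)
From mathcomp Require Import all_boot all_order all_algebra.
From mathcomp Require Import all_classical all_reals all_analysis.
Set Implicit Arguments. Unset Strict Implicit. Unset Printing Implicit Defensive.
Import Order.TTheory GRing.Theory Num.Theory.
Local Open Scope classical_set_scope.
Local Open Scope ring_scope.

Definition tnorm {R : realType} (x : R) : R :=
  Num.min (x - (Num.floor x)%:~R) ((Num.ceil x)%:~R - x).

Definition tzero {R : realType} (x : R) : Prop := exists k : int, x = k%:~R.

(* Borel subsets of T are identified with Borel subsets of [0,1);
   Haar probability measure = Lebesgue measure on [0,1).
   A is admissible iff (A - A) ∩ D = ∅ in T, D = {alpha i}. *)
Definition Md_admissible {R : realType} (r : nat) (alpha : 'I_r -> R)
  (A : set R) : Prop :=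
  measurable A /\ A `<=` [set x : R | 0 <= x < 1] /\
  forall x y, A x -> A y -> forall i : 'I_r, ~ tzero (x - y - alpha i).

Definition Md_T {R : realType} (r : nat) (alpha : 'I_r -> R) : \bar R :=
  ereal_sup [set (@lebesgue_measure R A) | A in Md_admissible alpha].

Definition in_closure_Zalpha {R : realType} (r : nat) (alpha beta : 'I_r -> R)
  : Prop :=
  forall e : R, 0 < e -> exists N : int,
    forall i : 'I_r, tnorm (beta i - N%:~R * alpha i) < e.

(* kappa_T(D) (defined as a sup; the max is attained by compactness) *)
Definition kappa_T {R : realType} (r : nat) (alpha : 'I_r -> R) : \bar R :=
  ereal_sup [set ((\big[Num.min/1]_(i < r) tnorm (beta i))%:E) |
             beta in in_closure_Zalpha alpha].

(* Take beta in the closure of Z alpha, let d be min_i ||beta_i|| and e > 0.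
   Some N in Z has ||beta_i - N alpha_i|| < e, hence ||N alpha_i|| > d - e =: c
   for every i; in particular N <> 0, and ||M alpha_i|| > c for M = |N|.
   The set A of x in [0,1) with {M x} < c is a union of M intervals of length
   c / M, so it has measure c; and for x, y in A the point M (x - y) lies
   within c of an integer, so x - y = alpha_i (mod 1) would force
   ||M alpha_i|| < c.  Hence Md(D) >= d - e. *)
From mathcomp Require Import all_boot all_order all_algebra.
From mathcomp Require Import all_classical all_reals all_analysis.
From mathcomp Require Import ring lra zify.
Import Order.TTheory GRing.Theory Num.Theory.
Local Open Scope classical_set_scope.
Local Open Scope ring_scope.

Section TorusNorm.
Context {R : realType}.
Implicit Types (x y : R) (k : int).

Lemma tnorm_le_dist x k : tnorm x <= `|x - k%:~R|.
Proof.
have /andP[floor_le lt_floorD1] := floor_itv x.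
have ceil_le : Num.ceil x <= Num.floor x + 1.
  by rewrite ceil_floor lerD2l; case: (x \isn't a Num.int).
rewrite /tnorm ge_min; have [k_le|floor_lt] := lerP k (Num.floor x).
- have k_leR : (k%:~R : R) <= (Num.floor x)%:~R by rewrite ler_int.
  by rewrite ger0_norm; [apply/orP; left|]; lra.
- have ceil_leR : ((Num.ceil x)%:~R : R) <= k%:~R by rewrite ler_int; lia.
  have floorD1_leR : ((Num.floor x + 1)%:~R : R) <= k%:~R by rewrite ler_int; lia.
  by rewrite ler0_norm; [apply/orP; right|]; lra.
Qed.

Lemma tnorm_attained x : exists k, tnorm x = `|x - k%:~R|.
Proof.
have /andP[floor_le _] := floor_itv x; have ceil_ge := Num.Theory.ceil_ge x.
rewrite /tnorm /Num.min /Order.min; case: ifP => _.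
- by exists (Num.floor x); rewrite ger0_norm //; lra.
- by exists (Num.ceil x); rewrite ler0_norm //; lra.
Qed.

Lemma tnormD x y : tnorm (x + y) <= tnorm x + tnorm y.
Proof.
have [k ->] := tnorm_attained x; have [l ->] := tnorm_attained y.
apply: le_trans (tnorm_le_dist _ (k + l)) _.
by rewrite intrD opprD addrACA ler_normD.
Qed.

Lemma tnormN x : tnorm (- x) = tnorm x.
Proof.
have tnormN_le y : tnorm (- y) <= tnorm y.
  have [k ->] := tnorm_attained y.
  by rewrite (le_trans (tnorm_le_dist _ (- k))) // intrN -opprD normrN.
by apply/le_anti; rewrite tnormN_le -{1}(opprK x) tnormN_le.
Qed.

Lemma tnormDz x k : tnorm (x + k%:~R) = tnorm x.
Proof.
have tnormDz_le y l : tnorm (y + l%:~R) <= tnorm y.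
  have [m ->] := tnorm_attained y.
  by rewrite (le_trans (tnorm_le_dist _ (m + l))) // intrD opprD addrACA subrr addr0.
apply/le_anti; rewrite tnormDz_le /=.
by rewrite -{1}(addrK k%:~R x) -intrN tnormDz_le.
Qed.

Lemma tnorm_lt1 x : tnorm x < 1.
Proof.
have /andP[floor_le lt_floorD1] := floor_itv x.
apply: le_lt_trans (tnorm_le_dist x (Num.floor x)) _.
by rewrite ger0_norm; rewrite intrD in lt_floorD1; lra.
Qed.

Lemma tnorm_mulz_absz k x : tnorm (k%:~R * x) = tnorm ((`|k|%N)%:R * x).
Proof. by case: k => n //; rewrite NegzE intrN mulNr tnormN. Qed.

End TorusNorm.

Section Arcs.
Context {R : realType}.
Variables (M : nat) (c : R).
Hypotheses (M_gt0 : (0 < M)%N) (c_gt0 : 0 < c) (c_le1 : c <= 1).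

Definition arc (k : nat) : set R :=
  [set` Interval (BLeft (k%:R / M%:R)) (BLeft ((k%:R + c) / M%:R))].

Definition arcs (n : nat) : set R := \big[setU/set0]_(k < n) arc k.

Let M_gt0R : 0 < M%:R :> R. Proof. by rewrite ltr0n. Qed.

Lemma arcP k x : arc k x -> k%:R <= M%:R * x < k%:R + c.
Proof.
rewrite /arc /= in_itv /= => /andP[lex ltx].
by rewrite mulrC -ler_pdivrMr // -ltr_pdivlMr // lex ltx.
Qed.

Lemma arcsP n x : arcs n x -> exists2 k, (k < n)%N & arc k x.
Proof.
elim: n => [|n IH]; first by rewrite /arcs big_ord0.
rewrite /arcs big_ord_recr /= => -[/IH [k lt_kn xk]|xn].
- by exists k => //; lia.
- by exists n.
Qed.

Lemma measurable_arcs n : measurable (arcs n).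
Proof.
elim: n => [|n IH]; first by rewrite /arcs big_ord0.
by rewrite /arcs big_ord_recr /=; apply: measurableU => //; apply: measurable_itv.
Qed.

Lemma arcs_mul_lt n x : arcs n x -> M%:R * x < n%:R.
Proof.
move=> /arcsP [k lt_kn /arcP /andP[_ ltx]].
have : (k.+1%:R : R) <= n%:R by rewrite ler_nat.
by rewrite -addn1 natrD; have := c_le1; lra.
Qed.

Lemma lebesgue_measure_arc k : lebesgue_measure (arc k) = (c / M%:R)%:E.
Proof.
rewrite lebesgue_measure_itv /= lte_fin ltr_pM2r ?invr_gt0 // ltrDl c_gt0.
by rewrite -EFinB -mulrBl addrAC subrr add0r.
Qed.

Lemma lebesgue_measure_arcs n : lebesgue_measure (arcs n) = (n%:R * c / M%:R)%:E.
Proof.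
elim: n => [|n IH]; first by rewrite /arcs big_ord0 measure0 !mul0r.
have disjoint_arc : arcs n `&` arc n = set0.
  apply/seteqP; split => x //= [/arcs_mul_lt ltx /arcP /andP[lex _]].
  by have := lt_le_trans ltx lex; rewrite ltxx.
rewrite /arcs big_ord_recr /= measureU //; last 2 first.
- exact: measurable_arcs.
- exact: measurable_itv.
change (lebesgue_measure (arcs n) + lebesgue_measure (arc n) =
        (n.+1%:R * c / M%:R)%:E)%E.
rewrite IH lebesgue_measure_arc -EFinD -addn1 natrD.
by congr (_%:E); rewrite mulrDl mul1r mulrDl.
Qed.

Lemma arcs_sub_unit : arcs M `<=` [set x | 0 <= x < 1].
Proof.
move=> x /[dup] /arcs_mul_lt ltx /arcsP [k _ /arcP /andP[lex _]].
have : 0 <= k%:R :> R by rewrite ler0n.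
rewrite /= -(pmulr_rge0 _ M_gt0R) -(ltr_pM2l M_gt0R) mulr1; lra.
Qed.

Lemma tnorm_mul_arcsB x y : arcs M x -> arcs M y -> tnorm (M%:R * (x - y)) < c.
Proof.
move=> /arcsP [k _ /arcP /andP[lex ltx]] /arcsP [l _ /arcP /andP[ley lty]].
apply: le_lt_trans (tnorm_le_dist _ (k%:Z - l%:Z)) _.
have -> : M%:R * (x - y) - (k%:Z - l%:Z)%:~R =
          (M%:R * x - k%:R) - (M%:R * y - l%:R) :> R by rewrite intrB; ring.
by rewrite ltr_norml; apply/andP; split; lra.
Qed.

End Arcs.

Section Bound.
Context {R : realType} {r : nat} (alpha : 'I_r -> R).

Lemma Md_T_ge0 : (0 <= Md_T alpha)%E.
Proof.
apply: ereal_sup_ubound; exists set0; last exact: measure0.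
by split; [exact: measurable0|split].
Qed.

Lemma Md_admissible_arcs (M : nat) (c : R) : (0 < M)%N -> 0 < c -> c <= 1 ->
  (forall i, c <= tnorm (M%:R * alpha i)) -> Md_admissible alpha (arcs M c M).
Proof.
move=> M_gt0 c_gt0 c_le1 c_le; split; first exact: measurable_arcs.
split; first exact: arcs_sub_unit.
move=> x y Ax Ay i [z alpha_eq]; have := c_le i; apply/negP; rewrite -ltNge.
have -> : alpha i = x - y + (- z)%:~R by rewrite intrN; lra.
rewrite mulrDr [M%:R in X in _ + X](_ : _ = (M%:Z)%:~R) // -intrM.
by rewrite tnormDz tnorm_mul_arcsB.
Qed.

Lemma Md_T_ge (M : nat) (c : R) : (0 < M)%N -> 0 < c -> c <= 1 ->
  (forall i, c <= tnorm (M%:R * alpha i)) -> (c%:E <= Md_T alpha)%E.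
Proof.
move=> M_gt0 c_gt0 c_le1 c_le; apply: ereal_sup_ubound.
exists (arcs M c M); first exact: Md_admissible_arcs.
by rewrite lebesgue_measure_arcs // mulrAC divff ?mul1r // pnatr_eq0 -lt0n.
Qed.

Lemma in_closure_Zalpha_tnorm_gt beta e : in_closure_Zalpha alpha beta -> 0 < e ->
  exists N : int, forall i,
    \big[Num.min/1]_(j < r) tnorm (beta j) - e < tnorm (N%:~R * alpha i).
Proof.
move=> /[apply] -[N close]; exists N => i.
have := tnormD (beta i - N%:~R * alpha i) (N%:~R * alpha i).
have := bigmin_le 1 i (fun j => tnorm (beta j)); have := close i.
rewrite subrK; lra.
Qed.

End Bound.
Arguments in_closure_Zalpha_tnorm_gt {R r alpha beta e}.

Local Open Scope ereal_scope.

Theorem mainTheorem13 (R : realType) (r : nat) (alpha : 'I_r -> R)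
  (hr : (0 < r)%N) (halpha : forall i : 'I_r, ~ tzero (alpha i)) :
  kappa_T alpha <= Md_T alpha.
Proof.
apply/ereal_supP => _ [beta beta_closure <-]; apply/lee_subgt0Pr => e e_gt0.
have [N N_gt] := in_closure_Zalpha_tnorm_gt beta_closure e_gt0.
move: N_gt; set c := (_ - e)%R => N_gt; rewrite -EFinB -/c.
have [c_le0|c_gt0] := lerP c 0%R.
  by apply: le_trans (Md_T_ge0 alpha); rewrite lee_fin.
pose i0 : 'I_r := Ordinal hr.
apply: (@Md_T_ge _ _ _ `|N|%N _ _ c_gt0).
- rewrite absz_gt0; apply: contraTneq (N_gt i0) => ->.
  by rewrite mul0r -leNgt (le_trans (tnorm_le_dist _ 0)) // subr0 normr0 ltW.
- exact/ltW/(lt_trans (N_gt i0))/tnorm_lt1.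
- by move=> i; rewrite -tnorm_mulz_absz ltW.
Qed.
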